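(* Let $\mathcal{S}\subset\mathbb{R}^n$ be compact convex, and let $f_1,\dots,f_T:\mathcal{S}\to\mathbb{R}$ be differentiable, $\ell$-strongly convex and $u$-smooth (i.e. $\nabla f_t$ is $u$-Lipschitz) with $\|\nabla f_t(x)\|\le G$ on $\mathcal{S}$. Let $\theta_1\in\mathcal{S}$ and $$\theta_{t+1}=\operatorname{argmin}_{\theta\in\mathcal{S}}\big\|\theta-(\theta_t-\eta_t\nabla f_t(\theta_t))\big\|^2,\qquad \eta_t=\frac{1-\gamma}{\ell(\gamma-\gamma^t)+u(1-\gamma)},$$ with $1-\gamma=1/T^\beta$, $\beta\in(0,1)$. Let $\theta_t^*=\operatorname{argmin}_{\theta\in\mathcal{S}}f_t(\theta)$ and $V^*=\sum_{t=2}^T\|\theta_t^*-\theta_{t-1}^*\|$. Then $$\sum_{t=1}^T\big(f_t(\theta_t)-f_t(\theta_t^* )\big)\le G\big(2(T^\beta-1)+u/\ell\big)\big(\|\theta_1-\theta_1^*\|+V^*\big).$$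
   Context: $\ell$-strongly convex: $f(y)\ge f(x)+\nabla f(x)^\top(y-x)+\frac\ell2\|x-y\|^2$ for all $x,y\in\mathcal{S}$. *)

From HB Require Import structures.
From mathcomp Require Import all_boot all_order all_algebra.
From mathcomp Require Import all_classical all_reals all_analysis.
Set Implicit Arguments. Unset Strict Implicit. Unset Printing Implicit Defensive.
Import Order.TTheory GRing.Theory Num.Theory.
Import numFieldNormedType.Exports.
Local Open Scope ring_scope.
Local Open Scope classical_set_scope.

Definition dotv (R : realType) (n : nat) (x y : 'rV[R]_n) : R :=
  \sum_(i < n) x ord0 i * y ord0 i.

Definition enorm (R : realType) (n : nat) (x : 'rV[R]_n) : R :=
  Num.sqrt (dotv x x).

Definition grad (R : realType) (n : nat) (f : 'rV[R]_n -> R) (x : 'rV[R]_n)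
  : 'rV[R]_n := \row_(i < n) ('D_(delta_mx ord0 i) f x : R).

Definition cvx_set (R : realType) (n : nat) (S : set 'rV[R]_n) : Prop :=
  forall x y, S x -> S y -> forall lam : R, 0 <= lam <= 1 ->
    S (lam *: x + (1 - lam) *: y).

Definition strongly_convex_on (R : realType) (n : nat) (l : R)
  (S : set 'rV[R]_n) (f : 'rV[R]_n -> R) : Prop :=
  forall x y, S x -> S y ->
    f y >= f x + dotv (grad f x) (y - x) + l / 2 * enorm (x - y) ^+ 2.

Definition smooth_on (R : realType) (n : nat) (u : R)
  (S : set 'rV[R]_n) (f : 'rV[R]_n -> R) : Prop :=
  forall x y, S x -> S y ->
    enorm (grad f x - grad f y) <= u * enorm (x - y).

Definition is_argmin (R : realType) (n : nat) (S : set 'rV[R]_n)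
  (g : 'rV[R]_n -> R) (x : 'rV[R]_n) : Prop :=
  S x /\ forall y, S y -> g x <= g y.

From HB Require Import structures.
From mathcomp Require Import all_boot all_order all_algebra.
From mathcomp Require Import all_classical all_reals all_analysis.
From mathcomp Require Import ring lra.
Import Order.TTheory GRing.Theory Num.Theory.
Import numFieldNormedType.Exports.
Local Open Scope ring_scope.
Local Open Scope classical_set_scope.
Set Implicit Arguments. Unset Strict Implicit. Unset Printing Implicit Defensive.

(* Each round costs at most G |θ_t - m_t| by convexity, where m_t minimises f_t
   on S, so it suffices to bound the tracking errors r_t = |θ_t - m_t|.  One
   projected gradient step contracts the distance to m_t by the factor
   1 - η_t l, and the step sizes satisfy 1/C <= η_t l with
   C = 2 (T^β - 1) + u/l; hence r_(t+1) <= (1 - 1/C) r_t + |m_(t+1) - m_t|,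
   which sums to Σ r_t <= C (r_1 + V).
   As f_t is only known on S, its gradient need not be co-coercive there.  The
   contraction rests instead on the directional estimate
   <G(x) - G(m), a> <= (1 - η l) |x - m| |a| for the gradient step
   G(y) = y - η ∇f(y) and a = θ_(t+1) - m, obtained by adding up a local
   two-point estimate (descent lemma plus strong convexity) along a segment of
   the triangle (m, x, θ_(t+1)), which lies in S. *)

Section Euclidean.
Variables (R : realType) (n : nat).
Implicit Types (x y z : 'rV[R]_n).

Lemma dotvC x y : dotv x y = dotv y x.
Proof. by apply: eq_bigr => i _; rewrite mulrC. Qed.

Lemma dotvDl x y z : dotv (x + y) z = dotv x z + dotv y z.
Proof. by rewrite /dotv -big_split; apply: eq_bigr => i _; rewrite mxE mulrDl. Qed.

Lemma dotvDr x y z : dotv z (x + y) = dotv z x + dotv z y.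
Proof. by rewrite dotvC dotvDl !(dotvC z). Qed.

Lemma dotvZl (c : R) x y : dotv (c *: x) y = c * dotv x y.
Proof. by rewrite /dotv mulr_sumr; apply: eq_bigr => i _; rewrite mxE mulrA. Qed.

Lemma dotvZr (c : R) x y : dotv x (c *: y) = c * dotv x y.
Proof. by rewrite dotvC dotvZl dotvC. Qed.

Lemma dotvNl x y : dotv (- x) y = - dotv x y.
Proof. by rewrite -scaleN1r dotvZl mulN1r. Qed.

Lemma dotvNr x y : dotv x (- y) = - dotv x y.
Proof. by rewrite dotvC dotvNl dotvC. Qed.

Lemma dotvBl x y z : dotv (x - y) z = dotv x z - dotv y z.
Proof. by rewrite dotvDl dotvNl. Qed.

Lemma dotvBr x y z : dotv z (x - y) = dotv z x - dotv z y.
Proof. by rewrite dotvDr dotvNr. Qed.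

Lemma dotv0l x : dotv 0 x = 0.
Proof. by rewrite /dotv big1 // => i _; rewrite mxE mul0r. Qed.

Lemma dotv0r x : dotv x 0 = 0.
Proof. by rewrite dotvC dotv0l. Qed.

Lemma dotvv_ge0 x : 0 <= dotv x x.
Proof. by rewrite sumr_ge0 // => i _; rewrite -expr2 sqr_ge0. Qed.

Lemma dotvv_eq0 x : dotv x x = 0 -> x = 0.
Proof.
move=> /eqP; rewrite psumr_eq0 => [/allP x0|i _]; last by rewrite -expr2 sqr_ge0.
apply/rowP => i; rewrite mxE.
by apply/eqP; rewrite -[_ == 0]orbb -mulf_eq0; apply: x0; rewrite mem_index_enum.
Qed.

Lemma enorm_ge0 x : 0 <= enorm x.
Proof. exact: sqrtr_ge0. Qed.

Lemma enorm_sqr x : enorm x ^+ 2 = dotv x x.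
Proof. by rewrite sqr_sqrtr // dotvv_ge0. Qed.

Lemma enorm_eq0 x : enorm x = 0 -> x = 0.
Proof. by move=> x0; apply: dotvv_eq0; rewrite -enorm_sqr x0 expr0n. Qed.

Lemma enorm_gt0 x : x != 0 -> 0 < enorm x.
Proof. by move=> x0; rewrite lt_def enorm_ge0 andbT; apply: contra x0 => /eqP/enorm_eq0->. Qed.

Lemma enorm0 : enorm (0 : 'rV[R]_n) = 0.
Proof. by rewrite /enorm dotv0l sqrtr0. Qed.

Lemma enormN x : enorm (- x) = enorm x.
Proof. by rewrite /enorm dotvNl dotvNr opprK. Qed.

Lemma enorm_distC x y : enorm (x - y) = enorm (y - x).
Proof. by rewrite -enormN opprB. Qed.

Lemma enormZ (c : R) x : enorm (c *: x) = `|c| * enorm x.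
Proof. by rewrite /enorm dotvZl dotvZr mulrA -expr2 sqrtrM ?sqr_ge0 // sqrtr_sqr. Qed.

Lemma cauchy_schwarz x y : dotv x y <= enorm x * enorm y.
Proof.
have [/enorm_eq0 ->|x0] := eqVneq (enorm x) 0; first by rewrite dotv0l enorm0 mul0r.
have [/enorm_eq0 ->|y0] := eqVneq (enorm y) 0; first by rewrite dotv0r enorm0 mulr0.
have nxy : 0 < enorm x * enorm y by rewrite mulr_gt0 // lt_def ?x0 ?y0 enorm_ge0.
have := dotvv_ge0 (enorm y *: x - enorm x *: y).
rewrite !(dotvBl, dotvBr, dotvZl, dotvZr) (dotvC y x) -!enorm_sqr => h.
have : 0 <= 2 * (enorm x * enorm y) * (enorm x * enorm y - dotv x y) by nra.
by rewrite pmulr_rge0 ?subr_ge0 // mulr_gt0.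
Qed.

Lemma cauchy_schwarzN x y : - (enorm x * enorm y) <= dotv x y.
Proof. by rewrite lerNl -dotvNl -(enormN x) cauchy_schwarz. Qed.

Lemma ler_enormD x y : enorm (x + y) <= enorm x + enorm y.
Proof.
rewrite -(ler_pXn2r (n := 2)) ?nnegrE ?addr_ge0 ?enorm_ge0 //.
rewrite enorm_sqr sqrrD !dotvDl !dotvDr (dotvC y x) -!enorm_sqr.
by have := cauchy_schwarz x y; lra.
Qed.

End Euclidean.

Section SmallPerturbation.
Variable R : realType.

Lemma ler_of_le_add_eps (A B K : R) :
  (forall e, 0 < e -> e < 1 -> A <= B + e * K) -> A <= B.
Proof.
move=> hAB; apply/ler_addgt0Pr => eps eps0.
pose e := Num.min 2^-1 (eps / (`|K| + 1)).
have K1 : 0 < `|K| + 1 by rewrite ltr_wpDl.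
have e0 : 0 < e by rewrite lt_min invr_gt0 ltr0n divr_gt0.
have e1 : e < 1 by rewrite gt_min invf_lt1 ?ltr0n ?ltr1n.
apply: (le_trans (hAB e e0 e1)); rewrite lerD2l.
have eK : e * `|K| <= eps / (`|K| + 1) * `|K| by rewrite ler_wpM2r ?ge_min ?lexx ?orbT.
have : eps / (`|K| + 1) * `|K| <= eps.
  by rewrite mulrAC ler_pdivrMr // ler_pM2l // lerDl.
have := ler_wpM2l (ltW e0) (ler_norm K); lra.
Qed.

Lemma ler_of_le_add_invn (A B K : R) :
  (forall N : nat, (0 < N)%N -> A <= B + K / N%:R) -> A <= B.
Proof.
move=> hAB; apply: (@ler_of_le_add_eps A B `|K|) => e e0 _.
pose N := (Num.truncn e^-1).+1.
have eN : e^-1 < N%:R by apply: truncnS_gt.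
have N0 : 0 < N%:R :> R by rewrite ltr0n.
have eN1 : 1 <= e * N%:R by rewrite -ler_pdivrMl // mulr1 ltW.
apply: (le_trans (hAB N isT)); rewrite lerD2l ler_pdivrMr // mulrAC.
exact: le_trans (ler_norm K) (ler_peMl (normr_ge0 K) eN1).
Qed.

End SmallPerturbation.

Section ConvexSet.
Variables (R : realType) (n : nat) (S : set 'rV[R]_n).
Hypothesis S_convex : cvx_set S.
Implicit Types (x y z : 'rV[R]_n).

Lemma segment_mem x y (lam : R) : S x -> S y -> 0 <= lam <= 1 ->
  S (y + lam *: (x - y)).
Proof.
move=> Sx Sy lam01; have := S_convex Sx Sy lam01.
by rewrite scalerBr scalerBl scale1r addrCA addrC.
Qed.

Lemma triangle_mem x y z (al be : R) : S x -> S y -> S z ->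
  0 <= al -> 0 <= be -> al + be <= 1 -> S (z + al *: (x - z) + be *: (y - z)).
Proof.
move=> Sx Sy Sz al0 be0 ab1.
have [ab0|ab0] := eqVneq (al + be) 0.
  have [-> ->] : al = 0 /\ be = 0 by split; lra.
  by rewrite !scale0r !addr0.
have ab_gt0 : 0 < al + be by rewrite lt_def ab0 addr_ge0.
have Sxy : S (x + (be / (al + be)) *: (y - x)).
  by apply: segment_mem; rewrite // divr_ge0 ?addr_ge0 //= ler_pdivrMr // mul1r lerDr.
have := segment_mem Sxy Sz (lam := al + be); rewrite addr_ge0 //= => /(_ ab1).
congr S; apply/rowP => j; rewrite !mxE; field; exact: lt0r_neq0.
Qed.

Lemma projection_dotv_le0 y xp z :
  is_argmin S (fun th => enorm (th - y) ^+ 2) xp -> S z ->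
  dotv (y - xp) (z - xp) <= 0.
Proof.
move=> [Sxp xp_min] Sz.
apply: (@ler_of_le_add_eps _ _ _ (dotv (z - xp) (z - xp) / 2)) => lam lam0 lam1.
have Sq : S (xp + lam *: (z - xp)) by apply: segment_mem; rewrite // !ltW.
have := xp_min _ Sq.
rewrite addrAC -[xp - y]opprB; move: (y - xp) (z - xp) => w e.
rewrite !enorm_sqr !(dotvDl, dotvDr, dotvZl, dotvZr, dotvNl, dotvNr, opprK) (dotvC e w).
move=> h; have : 0 <= lam * (lam * dotv e e - 2 * dotv w e) by nra.
by rewrite pmulr_rge0 // => h'; lra.
Qed.

End ConvexSet.

Section StronglyConvexSmooth.
Variables (R : realType) (n : nat) (S : set 'rV[R]_n) (f : 'rV[R]_n -> R) (l u : R).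
Hypotheses (S_convex : cvx_set S) (l_ge0 : 0 <= l)
  (f_sc : strongly_convex_on l S f) (f_sm : smooth_on u S f).
Implicit Types (x y z v a : 'rV[R]_n).

Definition grad_step (eta : R) x := x - eta *: grad f x.

Lemma grad_stepB eta x y :
  grad_step eta x - grad_step eta y = (x - y) - eta *: (grad f x - grad f y).
Proof. by apply/rowP => j; rewrite !mxE; ring. Qed.

Lemma convex_grad_le x y : S x -> S y -> f x + dotv (grad f x) (y - x) <= f y.
Proof.
move=> Sx Sy; apply: le_trans (f_sc Sx Sy); rewrite lerDl.
by rewrite mulr_ge0 ?divr_ge0 ?sqr_ge0.
Qed.

Lemma gap_le_grad_norm x y : S x -> S y ->
  f x - f y <= enorm (grad f x) * enorm (x - y).
Proof.
move=> Sx Sy; have := convex_grad_le Sx Sy; rewrite -opprB dotvNr.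
by have := cauchy_schwarz (grad f x) (x - y); lra.
Qed.

Lemma strongly_convex_smooth_eq x y : u < l -> S x -> S y -> x = y.
Proof.
move=> ul Sx Sy; have := f_sc Sx Sy; have := f_sc Sy Sx.
rewrite -[y - x]opprB dotvNr enormN => fyx fxy.
have mono : l * enorm (x - y) ^+ 2 <= dotv (grad f x - grad f y) (x - y).
  by rewrite dotvBl; lra.
have lip : dotv (grad f x - grad f y) (x - y) <= u * enorm (x - y) ^+ 2.
  apply: le_trans (cauchy_schwarz _ _) _.
  by rewrite expr2 mulrA ler_wpM2r ?enorm_ge0 ?f_sm.
have : (l - u) * enorm (x - y) ^+ 2 <= 0 by rewrite mulrBl; lra.
rewrite pmulr_rle0 ?subr_gt0 // => nxy.
apply/eqP; rewrite -subr_eq0; apply/eqP/enorm_eq0/eqP.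
by rewrite -sqrf_eq0 eq_le nxy sqr_ge0.
Qed.

Lemma smooth_ray_step y v (s h : R) : 0 <= s -> 0 <= h ->
  S y -> S (y - s *: v) -> S (y - (s + h) *: v) ->
  f (y - (s + h) *: v)
    <= f (y - s *: v) - h * dotv (grad f y) v + u * (s + h) * h * enorm v ^+ 2.
Proof.
move=> s0 h0 Sy Sp Sq; set q := y - (s + h) *: v.
have := convex_grad_le Sq Sp.
have -> : y - s *: v - q = h *: v by apply/rowP => j; rewrite !mxE; ring.
have -> : grad f q = grad f y + (grad f q - grad f y) by rewrite addrC subrK.
rewrite dotvZr dotvDl.
have lip : enorm (grad f q - grad f y) * enorm v <= u * (s + h) * enorm v ^+ 2.
  rewrite expr2 mulrA ler_wpM2r ?enorm_ge0 //; apply: le_trans (f_sm Sq Sy) _.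
  by rewrite /q addrAC subrr add0r enormN enormZ ger0_norm ?addr_ge0 // mulrA.
have := ler_wpM2l h0 lip.
have := ler_wpM2l h0 (cauchy_schwarzN (grad f q - grad f y) v).
lra.
Qed.

(* Summing smooth_ray_step over the N steps of the grid k/N on [0, 1], the
   terms (k + 1)/N add up to the factor u/2 up to a 1/N error. *)
Lemma smooth_descent_grid y v (N : nat) : (0 < N)%N -> S y -> S (y - v) ->
  f (y - v) <= f y - dotv (grad f y) v + u / 2 * enorm v ^+ 2 * (1 + N%:R^-1).
Proof.
move=> N0 Sy Syv; have N0r : 0 < N%:R :> R by rewrite ltr0n.
pose p k := y - (k%:R / N%:R) *: v.
have Sp k : (k <= N)%N -> S (p k).
  move=> kN; have -> : p k = y + (k%:R / N%:R) *: (y - v - y).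
    by rewrite addrAC subrr add0r scalerN.
  by apply: segment_mem; rewrite // divr_ge0 //= ler_pdivrMr // mul1r ler_nat.
have step k : (k < N)%N -> f (p k.+1) <=
    f (p k) - N%:R^-1 * dotv (grad f y) v + u * (k.+1%:R / N%:R) * N%:R^-1 * enorm v ^+ 2.
  move=> kN.
  have s0 : 0 <= k%:R / N%:R :> R by rewrite divr_ge0 // ltW.
  have h0 : 0 <= N%:R^-1 :> R by rewrite invr_ge0 ltW.
  have := smooth_ray_step s0 h0 Sy (Sp _ (ltnW kN)).
  have -> : k%:R / N%:R + N%:R^-1 = k.+1%:R / N%:R :> R by rewrite -natr1 mulrDl mul1r.
  by move/(_ (Sp _ kN)).
have sum_steps m : (m <= N)%N -> f (p m) <= f y - (m%:R / N%:R) * dotv (grad f y) v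
    + u * enorm v ^+ 2 * (m%:R * (m%:R + 1) / 2) / N%:R ^+ 2.
  elim: m => [|m IH] mN.
    by rewrite /p !mul0r scale0r !subr0 mulr0 mul0r addr0.
  apply: (le_trans (step m mN)); move: (IH (ltnW mN)).
  have -> : m.+1%:R = m%:R + 1 :> R by rewrite natr1.
  have -> : forall a w : R, f y - (m%:R + 1) / N%:R * a
      + u * w * ((m%:R + 1) * (m%:R + 1 + 1) / 2) / N%:R ^+ 2
    = f y - m%:R / N%:R * a + u * w * (m%:R * (m%:R + 1) / 2) / N%:R ^+ 2
      - a / N%:R + u * ((m%:R + 1) / N%:R) * w / N%:R.
    by move=> a w; field; rewrite gt_eqF.
  lra.
have := sum_steps N (leqnn N).
have -> : p N = y - v by rewrite /p divff ?scale1r // gt_eqF.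
suff -> : f y - N%:R / N%:R * dotv (grad f y) v
    + u * enorm v ^+ 2 * (N%:R * (N%:R + 1) / 2) / N%:R ^+ 2
  = f y - dotv (grad f y) v + u / 2 * enorm v ^+ 2 * (1 + N%:R^-1) by [].
by field; rewrite gt_eqF.
Qed.

Lemma smooth_descent y v : S y -> S (y - v) ->
  f (y - v) <= f y - dotv (grad f y) v + u / 2 * enorm v ^+ 2.
Proof.
move=> Sy Syv; apply: (@ler_of_le_add_invn _ _ _ (u / 2 * enorm v ^+ 2)) => N N0.
by have := smooth_descent_grid N0 Sy Syv; rewrite mulrDr mulr1 addrA.
Qed.

Lemma cross_descent y1 y2 t : S y1 -> S y2 -> S (y1 - t) -> S (y2 + t) ->
  2 * (dotv (grad f y1 - grad f y2) t - l * dotv (y1 - y2) t) - (u - l) * dotv t t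
  <= dotv (grad f y1 - grad f y2) (y1 - y2) - l * dotv (y1 - y2) (y1 - y2).
Proof.
move=> S1 S2 S1t S2t.
have D1 := smooth_descent S1 S1t.
have := smooth_descent (v := - t) S2; rewrite opprK => /(_ S2t) D2.
have C1 := f_sc S2 S1t; have C2 := f_sc S1 S2t.
move: D1 D2 C1 C2.
have -> : y1 - t - y2 = (y1 - y2) - t by apply/rowP => j; rewrite !mxE; ring.
have -> : y2 - (y1 - t) = - ((y1 - y2) - t) by apply/rowP => j; rewrite !mxE; ring.
have -> : y2 + t - y1 = - ((y1 - y2) - t) by apply/rowP => j; rewrite !mxE; ring.
have -> : y1 - (y2 + t) = (y1 - y2) - t by apply/rowP => j; rewrite !mxE; ring.
move: (y1 - y2) => d; rewrite enormN !enorm_sqr.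
rewrite !(dotvBl, dotvBr, dotvNl, dotvNr) (dotvC t d).
lra.
Qed.

Lemma grad_step_local (eta kap : R) y1 y2 a :
  0 < eta -> eta * (u + l) <= 2 -> 0 < kap -> kap * (2 * enorm a) = enorm (y1 - y2) ->
  S y1 -> S y2 -> S (2^-1 *: (y1 + y2) + kap *: a) -> S (2^-1 *: (y1 + y2) - kap *: a) ->
  dotv (grad_step eta y1 - grad_step eta y2) a <= (1 - eta * l) * enorm (y1 - y2) * enorm a.
Proof.
move=> eta0 etaul kap0 kap_a S1 S2 Sp Sm.
have := cross_descent (t := 2^-1 *: (y1 - y2) - kap *: a) S1 S2.
have -> : y1 - (2^-1 *: (y1 - y2) - kap *: a) = 2^-1 *: (y1 + y2) + kap *: a.
  by apply/rowP => j; rewrite !mxE; field.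
have -> : y2 + (2^-1 *: (y1 - y2) - kap *: a) = 2^-1 *: (y1 + y2) - kap *: a.
  by apply/rowP => j; rewrite !mxE; field.
move=> /(_ Sp Sm); rewrite grad_stepB.
move: (y1 - y2) (grad f y1 - grad f y2) kap_a => d G kap_a.
rewrite !(dotvBl, dotvBr, dotvZl, dotvZr) (dotvC a d) => H.
have na := enorm_ge0 a.
have aa : kap * (kap * dotv a a) = dotv d d / 4.
  by rewrite -!enorm_sqr -kap_a; field.
have X_le : kap * dotv d a <= dotv d d / 2.
  rewrite -enorm_sqr -kap_a; have := cauchy_schwarz d a; rewrite -kap_a => cs.
  by have := ler_wpM2l (ltW kap0) cs; nra.
have Y_ge : (u + l) * (kap * dotv d a) - (u - l) * (dotv d d / 2) <= 2 * (kap * dotv G a).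
  by have := congr1 (fun r : R => (u - l) * r) aa; lra.
rewrite -(ler_pM2l kap0).
have -> : kap * ((1 - eta * l) * enorm d * enorm a) = (1 - eta * l) * (dotv d d / 2).
  by rewrite -enorm_sqr -kap_a; field.
have h1 : 0 <= eta * (2 * (kap * dotv G a)
    - ((u + l) * (kap * dotv d a) - (u - l) * (dotv d d / 2))).
  by rewrite mulr_ge0 ?subr_ge0 // ltW.
have h2 : 0 <= (1 - eta * (u + l) / 2) * (dotv d d / 2 - kap * dotv d a).
  by rewrite mulr_ge0 ?subr_ge0 //; lra.
lra.
Qed.

(* Telescope along [c, c + d] with N pieces, each estimated by grad_step_local
   at width kap = |d| / (2 N |a|) <= k0. *)
Lemma grad_step_segment (eta k0 : R) c d a :
  0 < eta -> eta * (u + l) <= 2 -> 0 < k0 ->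
  (forall tau s : R, 0 <= tau <= 1 -> `|s| <= k0 -> S (c + tau *: d + s *: a)) ->
  dotv (grad_step eta (c + d) - grad_step eta c) a <= (1 - eta * l) * enorm d * enorm a.
Proof.
move=> eta0 etaul k00 Sseg.
have [->|a0] := eqVneq a 0; first by rewrite dotv0r enorm0 mulr0.
have [->|d0] := eqVneq d 0; first by rewrite addr0 subrr dotv0l enorm0 mulr0 mul0r.
have na := enorm_gt0 a0; have nd := enorm_gt0 d0.
pose N := (Num.truncn (enorm d / (2 * k0 * enorm a))).+1.
have N0 : 0 < N%:R :> R by rewrite ltr0n.
pose kap := enorm d / (2 * N%:R * enorm a).
have kap0 : 0 < kap by rewrite divr_gt0 ?mulr_gt0.
have kap_k0 : kap <= k0.
  have := truncnS_gt (enorm d / (2 * k0 * enorm a)); rewrite -/N.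
  rewrite ltr_pdivrMr ?mulr_gt0 // => dN.
  by rewrite /kap ler_pdivrMr ?mulr_gt0 //; lra.
pose z k := c + (k%:R / N%:R) *: d.
have Sz k : (k <= N)%N -> S (z k).
  move=> kN; have := Sseg (k%:R / N%:R) 0; rewrite scale0r addr0; apply.
    by rewrite divr_ge0 //= ler_pdivrMr // mul1r ler_nat.
  by rewrite normr0 ltW.
have step k : (0 <= k < N)%N -> dotv (grad_step eta (z k.+1) - grad_step eta (z k)) a
    <= (1 - eta * l) * (enorm d / N%:R) * enorm a.
  move=> /= kN.
  have dz : enorm (z k.+1 - z k) = enorm d / N%:R.
    have -> : z k.+1 - z k = N%:R^-1 *: d.
      by apply/rowP => j; rewrite !mxE -natr1; field; rewrite gt_eqF.
    by rewrite enormZ ger0_norm ?invr_ge0 ?ltW // mulrC.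
  have mid : 2^-1 *: (z k.+1 + z k) = c + ((k%:R + 2^-1) / N%:R) *: d.
    by apply/rowP => j; rewrite !mxE -natr1; field; rewrite gt_eqF.
  have tau01 : 0 <= (k%:R + 2^-1 : R) / N%:R <= 1.
    rewrite divr_ge0 ?addr_ge0 //= ler_pdivrMr // mul1r.
    by move: kN; rewrite -(ler_nat R) -natr1; lra.
  rewrite -dz; apply: (grad_step_local eta0 etaul kap0) (Sz _ kN) (Sz _ (ltnW kN)) _ _.
  - by rewrite dz /kap; field; rewrite !gt_eqF.
  - by rewrite mid; apply: Sseg; rewrite // gtr0_norm.
  - by rewrite mid -scaleNr; apply: Sseg; rewrite // normrN gtr0_norm.
have tel : \sum_(0 <= k < N) dotv (grad_step eta (z k.+1) - grad_step eta (z k)) a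
    = dotv (grad_step eta (z N)) a - dotv (grad_step eta (z 0%N)) a.
  by apply: (@telescope_sumr_eq _ _ _ (fun k => dotv (grad_step eta (z k)) a)) => // k _; exact: dotvBl.
have := ler_sum_nat step; rewrite tel.
rewrite sumr_const_nat subn0 /z divff ?gt_eqF // mul0r !scale1r scale0r addr0.
rewrite -dotvBl -(mulr_natr ((1 - eta * l) * (enorm d / N%:R) * enorm a)).
by rewrite [_ * N%:R](_ : _ = (1 - eta * l) * enorm d * enorm a) //; field; rewrite gt_eqF.
Qed.

Lemma grad_step_dotv_lipschitz (eta : R) x y a : 0 <= eta -> S x -> S y ->
  dotv (grad_step eta x - grad_step eta y) a <= (1 + eta * u) * enorm (x - y) * enorm a.
Proof.
move=> eta0 Sx Sy; rewrite grad_stepB dotvBl dotvZl.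
have := cauchy_schwarz (x - y) a.
have := ler_wpM2l eta0 (cauchy_schwarzN (grad f x - grad f y) a).
have := ler_wpM2l eta0 (ler_wpM2r (enorm_ge0 a) (f_sm Sx Sy)).
lra.
Qed.

(* Apply grad_step_segment on the segment of the triangle (xs, x, xp) shifted
   by del/3 towards its interior, and let del -> 0. *)
Lemma grad_step_dotv_contract (eta : R) x xs xp :
  0 < eta -> eta * (u + l) <= 2 -> S x -> S xs -> S xp ->
  dotv (grad_step eta x - grad_step eta xs) (xp - xs)
    <= (1 - eta * l) * enorm (x - xs) * enorm (xp - xs).
Proof.
move=> eta0 etaul Sx Sxs Sxp.
set d := x - xs; set a := xp - xs.
pose w1 : 'rV[R]_n := (2 / 3) *: d - (1 / 3) *: a.
pose w2 : 'rV[R]_n := (1 / 3) *: (d + a).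
apply: (@ler_of_le_add_eps _ _ _ ((1 + eta * u) * (enorm w1 + enorm w2) * enorm a
  - (1 - eta * l) * enorm d * enorm a)) => del del0 del1.
pose c := xs + (del / 3) *: d + (del / 3) *: a.
have Sseg tau s : 0 <= tau <= 1 -> `|s| <= del / 3 ->
    S (c + tau *: ((1 - del) *: d) + s *: a).
  rewrite ler_norml => /andP[tau0 tau1] /andP[s_lo s_hi].
  have -> : c + tau *: ((1 - del) *: d) + s *: a
      = xs + (del / 3 + tau * (1 - del)) *: (x - xs) + (del / 3 + s) *: (xp - xs).
    by apply/rowP => j; rewrite !mxE; ring.
  have t0 : 0 <= tau * (1 - del) by rewrite mulr_ge0 // subr_ge0 ltW.
  have t1 : tau * (1 - del) <= 1 - del by rewrite ler_piMl // subr_ge0 ltW.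
  by apply: triangle_mem => //; lra.
have Sc : S c.
  by have := Sseg 0 0; rewrite !scale0r !addr0 normr0 lexx ler01 divr_ge0 ?ltW //; apply.
have Scd : S (c + (1 - del) *: d).
  by have := Sseg 1 0; rewrite scale1r scale0r addr0 normr0 lexx ler01 divr_ge0 ?ltW //; apply.
have del3 : 0 < del / 3 by rewrite divr_gt0.
have seg := grad_step_segment eta0 etaul del3 Sseg.
have L1 := grad_step_dotv_lipschitz a (ltW eta0) Sx Scd.
have L2 := grad_step_dotv_lipschitz a (ltW eta0) Sc Sxs.
have e1 : x - (c + (1 - del) *: d) = del *: w1.
  by apply/rowP => j; rewrite !mxE; field.
have e2 : c - xs = del *: w2 by apply/rowP => j; rewrite !mxE; field.
rewrite e1 enormZ gtr0_norm // in L1; rewrite e2 enormZ gtr0_norm // in L2.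
rewrite enormZ ger0_norm ?subr_ge0 in seg; last exact: ltW.
have chain p q r w : dotv (p - w) a = dotv (p - q) a + dotv (q - r) a + dotv (r - w) a.
  by rewrite -!dotvDl !addrA !subrK.
rewrite (chain _ (grad_step eta (c + (1 - del) *: d)) (grad_step eta c)).
apply: le_trans (lerD (lerD L1 seg) L2) _.
by rewrite le_eqVlt; apply/orP; left; apply/eqP; ring.
Qed.

Lemma argmin_grad_dotv_ge0 xs z : is_argmin S f xs -> S z ->
  0 <= dotv (grad f xs) (z - xs).
Proof.
move=> [Sxs xs_min] Sz; rewrite -oppr_le0.
apply: (@ler_of_le_add_eps _ _ _ (u * enorm (z - xs) ^+ 2)) => lam lam0 lam1.
have Sy : S (xs + lam *: (z - xs)) by apply: segment_mem; rewrite // !ltW.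
have gy : 0 <= dotv (grad f (xs + lam *: (z - xs))) (z - xs).
  have := convex_grad_le Sy Sxs; have := xs_min _ Sy.
  rewrite opprD addNKr dotvNr dotvZr => h1 h2.
  have : 0 <= lam * dotv (grad f (xs + lam *: (z - xs))) (z - xs) by lra.
  by rewrite pmulr_rge0.
have lip : enorm (grad f (xs + lam *: (z - xs)) - grad f xs) <= u * (lam * enorm (z - xs)).
  by have := f_sm Sy Sxs; rewrite addrAC subrr add0r enormZ gtr0_norm.
have := cauchy_schwarz (grad f (xs + lam *: (z - xs)) - grad f xs) (z - xs).
have := ler_wpM2r (enorm_ge0 (z - xs)) lip.
rewrite dotvBl expr2; lra.
Qed.

Lemma proj_grad_step_contract (eta : R) x xs xp :
  0 < eta -> eta * (u + l) <= 2 -> eta * l <= 1 -> S x -> is_argmin S f xs ->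
  is_argmin S (fun th => enorm (th - grad_step eta x) ^+ 2) xp ->
  enorm (xp - xs) <= (1 - eta * l) * enorm (x - xs).
Proof.
move=> eta0 etaul etal Sx xs_min xp_proj.
have Sxs := xs_min.1; have Sxp := xp_proj.1.
have obtuse := projection_dotv_le0 S_convex xp_proj Sxs.
have opt := argmin_grad_dotv_ge0 xs_min Sxp.
have dir := grad_step_dotv_contract eta0 etaul Sx Sxs Sxp.
have key : enorm (xp - xs) ^+ 2 <= dotv (grad_step eta x - grad_step eta xs) (xp - xs).
  move: obtuse; rewrite enorm_sqr -[xs - xp]opprB dotvNr oppr_le0 /grad_step.
  rewrite !dotvBl !dotvZl.
  have := mulr_ge0 (ltW eta0) opt; lra.
have [->|a0] := eqVneq (xp - xs) 0; first by rewrite enorm0 mulr_ge0 ?subr_ge0 ?enorm_ge0.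
have := le_trans key dir; rewrite expr2 -mulrA [_ * enorm (xp - xs)]mulrC mulrA.
by rewrite ler_pM2r ?enorm_gt0.
Qed.

End StronglyConvexSmooth.

Section RegretArithmetic.
Variable R : realType.

Lemma sum_le_of_recurrence (r v : nat -> R) (C : R) (T : nat) :
  1 <= C -> (forall t, 0 <= r t) ->
  (forall t, (1 <= t < T)%N -> r t.+1 <= (1 - C^-1) * r t + v t.+1) ->
  \sum_(1 <= t < T.+1) r t <= C * (r 1%N + \sum_(2 <= t < T.+1) v t).
Proof.
move=> C1 r0 rec; have C0 : 0 < C := lt_le_trans ltr01 C1.
have [->|T0] := posnP T.
  by rewrite !big_geq // addr0 mulr_ge0 // ltW.
set s := \sum_(1 <= t < T.+1) r t.
have s_split : s = r 1%N + \sum_(1 <= t < T) r t.+1 by rewrite /s big_nat_recl.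
have s_ge : \sum_(1 <= t < T) r t <= s by rewrite /s big_nat_recr //= lerDl.
have v_shift : \sum_(2 <= t < T.+1) v t = \sum_(1 <= t < T) v t.+1 by rewrite big_add1.
have := ler_sum_nat rec; rewrite big_split /= -mulr_sumr -v_shift => hs.
have : (1 - C^-1) * \sum_(1 <= t < T) r t <= (1 - C^-1) * s.
  by rewrite ler_wpM2l // subr_ge0 invf_le1.
by move=> h; rewrite -ler_pdivrMl //; lra.
Qed.


Lemma step_size_bounds (l u P : R) (t : nat) : 0 < l -> l <= u -> 1 <= P -> (1 <= t)%N ->
  let gamma := 1 - P^-1 in
  let eta := (1 - gamma) / (l * (gamma - gamma ^+ t) + u * (1 - gamma)) in
  [/\ 0 < eta, eta * (u + l) <= 2, eta * l <= 1 & (2 * (P - 1) + u / l)^-1 <= eta * l].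
Proof.
move=> l0 lu P1 t1 gamma eta.
have P0 : 0 < P := lt_le_trans ltr01 P1.
have invP0 : 0 < P^-1 by rewrite invr_gt0.
have invP1 : P^-1 <= 1 by rewrite invf_le1.
have g0 : 0 <= gamma by rewrite subr_ge0.
have g1 : gamma <= 1 by rewrite /gamma lerBlDr lerDl ltW.
have gt0 : 0 <= gamma ^+ t := exprn_ge0 t g0.
have gtg : gamma ^+ t <= gamma.
  by case: t t1 {eta gt0} => // t _; rewrite exprS ler_piMr // exprn_ile1.
set D := l * (gamma - gamma ^+ t) + u * (1 - gamma).
have eg : 1 - gamma = P^-1 by rewrite /gamma opprB addrCA subrr addr0.
have D_lo : u * P^-1 <= D by rewrite /D eg lerDr mulr_ge0 ?subr_ge0 // ltW.
have D_hi : D <= l * (1 - P^-1) + u * P^-1.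
  by rewrite /D eg lerD2r; apply: ler_wpM2l; [exact: ltW | rewrite -[1 - P^-1]/gamma gerBl].
have D0 : 0 < D := lt_le_trans (mulr_gt0 (lt_le_trans l0 lu) invP0) D_lo.
have etaE : eta = P^-1 / D by rewrite /eta -/D eg.
have eta0 : 0 < eta by rewrite etaE divr_gt0.
have etau : eta * u <= 1 by rewrite etaE mulrAC ler_pdivrMr // mul1r mulrC.
have etal : eta * l <= eta * u by rewrite ler_pM2l.
split; [done | rewrite mulrDr; lra | lra | rewrite etaE].
have C0 : 0 < 2 * (P - 1) + u / l.
  by rewrite ltr_wpDl ?divr_gt0 ?(lt_le_trans l0 lu) // mulr_ge0 // subr_ge0.
rewrite -[X in X <= _]div1r ler_pdivrMr //.
have -> : P^-1 / D * l * (2 * (P - 1) + u / l) = (2 * l * (1 - P^-1) + u * P^-1) / D.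
  by field; rewrite !gt_eqF.
rewrite ler_pdivlMr // mul1r.
have : 0 <= l * (1 - P^-1) by rewrite mulr_ge0 ?subr_ge0 // ltW.
lra.
Qed.
End RegretArithmetic.

Section OnlineGradientDescent.
Variables (R : realType) (n : nat) (S : set 'rV[R]_n).
Implicit Types (theta thstar : nat -> 'rV[R]_n) (T : nat).

Lemma argmin_iterates_mem (g : nat -> 'rV[R]_n -> R) theta T :
  S (theta 1%N) -> (forall t, (1 <= t < T)%N -> is_argmin S (g t) (theta t.+1)) ->
  forall t, (1 <= t <= T)%N -> S (theta t).
Proof.
move=> S1 step; elim=> // t IH /andP[_ tT].
have [->|t0] := posnP t; first exact: S1.
by have := step t; rewrite t0 tT => /(_ isT) [].
Qed.

Lemma dynamic_regret_le (f : nat -> 'rV[R]_n -> R) (l u G C : R) (eta : nat -> R)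
    theta thstar T :
  (1 <= T)%N -> cvx_set S -> 0 <= l -> 1 <= C ->
  (forall t, (1 <= t <= T)%N ->
     [/\ strongly_convex_on l S (f t), smooth_on u S (f t)
       & forall x, S x -> enorm (grad (f t) x) <= G]) ->
  (forall t, (1 <= t < T)%N ->
     [/\ 0 < eta t, eta t * (u + l) <= 2, eta t * l <= 1 & C^-1 <= eta t * l]) ->
  S (theta 1%N) ->
  (forall t, (1 <= t < T)%N ->
     is_argmin S (fun th => enorm (th - grad_step (f t) (eta t) (theta t)) ^+ 2)
       (theta t.+1)) ->
  (forall t, (1 <= t <= T)%N -> is_argmin S (f t) (thstar t)) ->
  \sum_(1 <= t < T.+1) (f t (theta t) - f t (thstar t))
    <= G * C * (enorm (theta 1%N - thstar 1%N)
                + \sum_(2 <= t < T.+1) enorm (thstar t - thstar t.-1)).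
Proof.
move=> T1 S_convex l0 C1 hf heta S1 hproj hmin.
have Sth := argmin_iterates_mem S1 hproj.
have G0 : 0 <= G.
  by have [_ _ hG] := hf 1%N T1; exact: le_trans (enorm_ge0 _) (hG _ S1).
pose r t := enorm (theta t - thstar t).
have rec t : (1 <= t < T)%N ->
    r t.+1 <= (1 - C^-1) * r t + enorm (thstar t.+1 - thstar t.+1.-1).
  move=> ht; have tT' : (1 <= t <= T)%N by case/andP: ht => -> /ltnW.
  have [eta0 etaul etal etaC] := heta t ht.
  have [hsc hsm _] := hf t tT'.
  have contr := proj_grad_step_contract S_convex l0 hsc hsm eta0 etaul etal
    (Sth t tT') (hmin t tT') (hproj t ht).
  have rC : (1 - eta t * l) * r t <= (1 - C^-1) * r t.
    by rewrite ler_wpM2r ?enorm_ge0 // lerD2l lerN2.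
  have tri : r t.+1 <= enorm (theta t.+1 - thstar t) + enorm (thstar t.+1 - thstar t).
    rewrite /r -[theta t.+1 - thstar t.+1](subrKA (thstar t)).
    by rewrite [enorm (thstar t.+1 - _)]enorm_distC ler_enormD.
  by apply: le_trans tri _; rewrite lerD2r (le_trans contr).
apply: (@le_trans _ _ (G * \sum_(1 <= t < T.+1) r t)).
  rewrite big_distrr /=; apply: ler_sum_nat => t tT.
  have [hsc _ hG] := hf t tT.
  apply: le_trans (gap_le_grad_norm l0 hsc (Sth t tT) (hmin t tT).1) _.
  by apply: ler_wpM2r; [exact: enorm_ge0 | exact: hG (Sth t tT)].
by rewrite -mulrA ler_wpM2l // sum_le_of_recurrence // => t; exact: enorm_ge0.
Qed.

End OnlineGradientDescent.

Unset Implicit Arguments.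

Theorem theorem3p4 (R : realType) (n T : nat) (S : set 'rV[R]_n)
  (f : nat -> 'rV[R]_n -> R) (l u G beta : R)
  (theta thstar : nat -> 'rV[R]_n) :
  (1 <= T)%N ->
  compact S -> cvx_set S ->
  0 < l -> 0 < u ->
  0 < beta < 1 ->
  (forall t, (1 <= t <= T)%N ->
     (forall x, S x -> differentiable (f t) x) /\
     strongly_convex_on l S (f t) /\
     smooth_on u S (f t) /\
     (forall x, S x -> enorm (grad (f t) x) <= G)) ->
  let gamma := 1 - (T%:R `^ beta)^-1 in
  let eta := fun t : nat =>
    (1 - gamma) / (l * (gamma - gamma ^+ t) + u * (1 - gamma)) in
  S (theta 1%N) ->
  (forall t, (1 <= t < T)%N ->
     is_argmin S
       (fun th => enorm (th - (theta t - eta t *: grad (f t) (theta t))) ^+ 2)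
       (theta t.+1)) ->
  (forall t, (1 <= t <= T)%N -> is_argmin S (f t) (thstar t)) ->
  let Vstar := \sum_(2 <= t < T.+1) enorm (thstar t - thstar t.-1) in
  \sum_(1 <= t < T.+1) (f t (theta t) - f t (thstar t))
    <= G * (2 * (T%:R `^ beta - 1) + u / l)
         * (enorm (theta 1%N - thstar 1%N) + Vstar).
Proof.
move=> T1 _ S_convex l0 u0 /andP[beta0 _] hf gamma eta S1 hproj hmin; cbv zeta.
have hf_t t : (1 <= t <= T)%N -> [/\ strongly_convex_on l S (f t), smooth_on u S (f t)
    & forall x, S x -> enorm (grad (f t) x) <= G].
  by move=> /hf[_ [? [? ?]]].
have P1 : 1 <= T%:R `^ beta.
  by have := @ler_powR _ T%:R _ 0 beta (ltW beta0); rewrite powRr0 ler1n; apply.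
have [lu|ul] := lerP l u.
  apply: dynamic_regret_le hf_t _ S1 hproj hmin => //; first exact: ltW.
  - have : 1 <= u / l by rewrite ler_pdivlMr // mul1r.
    have : 0 <= 2 * (T%:R `^ beta - 1) by rewrite mulr_ge0 // subr_ge0.
    lra.
  - by move=> t /andP[t1 _]; apply: step_size_bounds.
have Sth := argmin_iterates_mem S1 hproj.
rewrite big_nat big1 => [|t tT]; last first.
  have [hsc hsm _] := hf_t t tT.
  by rewrite (strongly_convex_smooth_eq hsc hsm ul (Sth t tT) (hmin t tT).1) subrr.
have [_ _ hG] := hf_t 1%N T1.
have G0 : 0 <= G := le_trans (enorm_ge0 _) (hG _ S1).
have C0 : 0 <= 2 * (T%:R `^ beta - 1) + u / l.
  by apply: addr_ge0; [rewrite mulr_ge0 // subr_ge0 | rewrite divr_ge0 // ltW].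
have V0 : 0 <= \sum_(2 <= t < T.+1) enorm (thstar t - thstar t.-1).
  by rewrite sumr_ge0 // => t _; exact: enorm_ge0.
by rewrite !mulr_ge0 // addr_ge0 ?enorm_ge0.
Qed.
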